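(* Let $\varepsilon>0$, and consider a colouring of the edges of the complete bipartite graph $K_{n,n}$ with parts $X,Y$ (each of size $n$) in red and blue such that every vertex of $X$ is incident to at least $\varepsilon n$ red edges and every vertex of $Y$ is incident to at least $\varepsilon n$ blue edges. Then this colouring contains at least $\varepsilon^4n^4/150$ distinct copies of $M_1$.
   Context: $M_1$ is the properly $2$-edge-coloured $K_{2,2}$, i.e. a $4$-cycle whose edges are alternately red and blue. *)

From mathcomp Require Import all_boot all_order all_algebra.
Set Implicit Arguments. Unset Strict Implicit. Unset Printing Implicit Defensive.

(* A red/blue colouring of the edges of K_{n,n} with parts X = 'I_n and
   Y = 'I_n: c x y = true means the edge xy (x in X, y in Y) is red,
   false means blue. *)

(* The 4-cycle spanned by Xs = {x1,x2} and Ys = {y1,y2} (the only K_{2,2}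
   on these vertices) is a copy of M_1, i.e. its edges x1y1, y1x2, x2y2,
   y2x1 are alternately red and blue. *)
Definition is_M1_copy (n : nat) (c : 'I_n -> 'I_n -> bool)
  (Xs Ys : {set 'I_n}) : bool :=
  [exists x1 : 'I_n, exists x2 : 'I_n, exists y1 : 'I_n, exists y2 : 'I_n,
     [&& x1 != x2, y1 != y2, Xs == [set x1; x2], Ys == [set y1; y2],
         c x1 y1 == c x2 y2, c x2 y1 == c x1 y2 & c x1 y1 != c x2 y1]].

Definition M1_copies (n : nat) (c : 'I_n -> 'I_n -> bool)
  : {set {set 'I_n} * {set 'I_n}} :=
  [set p | is_M1_copy c p.1 p.2].

(* Count the ordered alternating quadruples (x, z, y, y'), with xy, zy' red
   and zy, xy' blue: there are Q = sum_(x,z) d(x,z) d(z,x) of them, where d(x,z)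
   counts the red neighbours of x that are blue for z, and each copy of M_1
   arises from at most four.  If x has red degree at most that of z then
   d(x,z) <= d(z,x), so Q dominates the number of triples (z, y, y') with y, y'
   red for x and blue for some z of no smaller red degree.  Let e = eps n and
   let L be the set of x having fewer than e/4 vertices of smaller red degree,
   so |L| >= e/4.  Fix y, y'.  If they have e/2 common blue neighbours, every
   x in L red to both sees more than e/4 such z; otherwise each of them has
   e/2 blue neighbours red for the other, which contributes e^2/4 to the same
   count Q read from the side of Y.  Summing over (y, y') gives
   |L| e^4 <= 4 (e + |L|) Q, hence Q >= e^4/20. *)

From mathcomp Require Import all_boot all_order all_algebra.
From mathcomp Require Import ring lra.
Import Order.TTheory GRing.Theory Num.Theory.
Set Implicit Arguments. Unset Strict Implicit. Unset Printing Implicit Defensive.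

Lemma sum_nat_boolE (T : finType) (P : pred T) :
  \sum_x (P x : nat) = #|[set x | P x]|.
Proof. by rewrite -sum1dep_card [RHS]big_mkcond; apply: eq_bigr => x _; case: (P x). Qed.

Lemma exchange_big4 (I J : finType) (F : I -> I -> J -> J -> nat) :
  \sum_i \sum_i' \sum_j \sum_j' F i i' j j' = \sum_j \sum_j' \sum_i \sum_i' F i i' j j'.
Proof.
under eq_bigr do rewrite exchange_big /=; rewrite exchange_big /=.
by apply: eq_bigr => j _; under eq_bigr do rewrite exchange_big; rewrite exchange_big.
Qed.

Section LowRank.

Variables (T : finType) (f : T -> nat).

Definition rank_below x := #|[set z | f z < f x]|.

Lemma card_low_rank (R : realDomainType) (t : R) :
  (t <= #|T|%:R -> t <= #|[set x | (rank_below x)%:R < t]|%:R)%R.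
Proof.
move=> t_le_T; set S := [set x | _].
have [x0 x0S | S_full] := pickP [predC S]; last first.
  suff -> : S = setT by rewrite cardsT.
  by apply/setP => x; have := S_full x; rewrite /= !inE => /negbFE.
have [x xS x_min] := arg_minnP f x0S.
apply: (le_trans (_ : t <= (rank_below x)%:R)%R).
  by move: xS; rewrite /= inE -leNgt.
rewrite ler_nat; apply/subset_leq_card/subsetP => z; rewrite inE => fzx.
by apply: contraLR fzx => zS; rewrite -leqNgt x_min.
Qed.

End LowRank.

(* Swapping the sides and the colours turns the blue-degree condition on Y
   into a red-degree condition, and preserves alternating quadruples. *)
Definition dual_col (X Y : finType) (c : X -> Y -> bool) : Y -> X -> bool :=
  fun y x => ~~ c x y.

Section ColourCounts.

Variables (X Y : finType) (c : X -> Y -> bool).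

Definition red_deg x := \sum_y (c x y : nat).
Definition common_red x z := \sum_y (c x y && c z y).
Definition red_diff x z := \sum_y (c x y && ~~ c z y).

Definition alternating x z y y' := [&& c x y, ~~ c z y, c z y' & ~~ c x y'].
Definition alt_quads := \sum_x \sum_z red_diff x z * red_diff z x.

Lemma red_degE x : red_deg x = #|[set y | c x y]|.
Proof. exact: sum_nat_boolE. Qed.

Lemma red_deg_le_card x : red_deg x <= #|Y|.
Proof. by rewrite red_degE max_card. Qed.

Lemma red_deg_split x z : red_deg x = common_red x z + red_diff x z.
Proof. by rewrite -big_split; apply: eq_bigr => y _; case: (c x y); case: (c z y). Qed.

Lemma common_redC x z : common_red x z = common_red z x.
Proof. by apply: eq_bigr => y _; rewrite andbC. Qed.

Lemma red_diff_le x z : red_deg x <= red_deg z -> red_diff x z <= red_diff z x.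
Proof. by rewrite (red_deg_split x z) (red_deg_split z x) common_redC leq_add2l. Qed.

Lemma red_diff_mul x z :
  red_diff x z * red_diff z x = \sum_y \sum_y' (alternating x z y y' : nat).
Proof.
rewrite big_distrlr; apply: eq_bigr => y _; apply: eq_bigr => y' _.
by rewrite /alternating; case: (c x y); case: (c z y); case: (c z y'); case: (c x y').
Qed.

Lemma alt_quads_card :
  alt_quads = #|[set q : (X * X) * (Y * Y) | alternating q.1.1 q.1.2 q.2.1 q.2.2]|.
Proof.
rewrite -sum_nat_boolE /alt_quads.
rewrite -(pair_bigA _ (fun p q => (alternating p.1 p.2 q.1 q.2 : nat))) [LHS]pair_bigA.
by apply: eq_bigr => -[x z] _; rewrite red_diff_mul pair_bigA.
Qed.

Definition blue_above x y y' :=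
  \sum_z ((red_deg x <= red_deg z) && ~~ c z y && ~~ c z y').

Lemma sum_red_diff_sq x :
  \sum_(z | red_deg x <= red_deg z) red_diff x z ^ 2
  = \sum_y \sum_y' (c x y && c x y') * blue_above x y y'.
Proof.
under eq_bigr do rewrite -mulnn big_distrlr.
rewrite exchange_big; apply: eq_bigr => y _; rewrite exchange_big; apply: eq_bigr => y' _.
rewrite big_distrr big_mkcond; apply: eq_bigr => z _ /=.
by case: leqP; case: (c x y); case: (c z y); case: (c x y'); case: (c z y').
Qed.

Lemma sum_blue_above_le (A : {set X}) :
  \sum_y \sum_y' \sum_(x in A) (c x y && c x y') * blue_above x y y' <= alt_quads.
Proof.
under eq_bigr => y _ do rewrite exchange_big; rewrite exchange_big /=.
rewrite [alt_quads](bigID (mem A)) /=; apply: leq_trans (leq_addr _ _).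
apply: leq_sum => x _; rewrite -sum_red_diff_sq.
rewrite [X in _ <= X](bigID (fun z => red_deg x <= red_deg z)) /=.
apply: leq_trans (leq_addr _ _); apply: leq_sum => z le_xz.
by rewrite -mulnn leq_mul2l red_diff_le ?orbT.
Qed.

Lemma sum_red_pairs (A : {set X}) :
  \sum_y \sum_y' \sum_(x in A) (c x y && c x y') = \sum_(x in A) red_deg x ^ 2.
Proof.
under eq_bigr => y _ do rewrite exchange_big.
rewrite exchange_big; apply: eq_bigr => x _.
by rewrite -mulnn /red_deg big_distrlr; apply: eq_bigr => y _; apply: eq_bigr => y' _ /=; rewrite mulnb.
Qed.

End ColourCounts.

Section Duality.

Variables (X Y : finType) (c : X -> Y -> bool).

Lemma alt_quads_dual :
  alt_quads (dual_col c) = alt_quads c.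
Proof.
rewrite /alt_quads; under eq_bigr do under eq_bigr do rewrite red_diff_mul.
under [RHS]eq_bigr do under eq_bigr do rewrite red_diff_mul.
rewrite exchange_big4 exchange_big; apply: eq_bigr => z _; apply: eq_bigr => x _.
apply: eq_bigr => y _; apply: eq_bigr => y' _.
by rewrite /alternating /dual_col !negbK; case: (c x y); case: (c z y); case: (c z y'); case: (c x y').
Qed.

Lemma common_blue_le x y y' :
  common_red (dual_col c) y y' <= blue_above c x y y' + rank_below (red_deg c) x.
Proof.
rewrite /rank_below -sum_nat_boolE -big_split; apply: leq_sum => z _.
by rewrite /dual_col; case: leqP; case: (c z y); case: (c z y').
Qed.

End Duality.

Lemma set2_ord_inj n (a b a' b' : 'I_n) :
  a != b -> a' != b' -> [set a; b] = [set a'; b'] -> (a < b) = (a' < b') ->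
  a = a' /\ b = b'.
Proof.
move=> neq_ab neq_ab' eq_ab lt_ab.
have : a \in [set a'; b'] by rewrite -eq_ab set21.
have : b \in [set a'; b'] by rewrite -eq_ab set22.
rewrite !inE => /orP[] /eqP eb /orP[] /eqP ea; subst => //; first by rewrite eqxx in neq_ab.
  by move: lt_ab neq_ab'; case: ltngtP => // /val_inj ->; rewrite eqxx.
by rewrite eqxx in neq_ab.
Qed.

Lemma alt_quads_le_copies n (c : 'I_n -> 'I_n -> bool) :
  alt_quads c <= 4 * #|M1_copies c|.
Proof.
rewrite alt_quads_card.
set Q := [set q | _].
pose shape (q : ('I_n * 'I_n) * ('I_n * 'I_n)) :=
  (([set q.1.1; q.1.2], [set q.2.1; q.2.2]), (q.1.1 < q.1.2, q.2.1 < q.2.2)).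
have alt_neq q : q \in Q -> q.1.1 != q.1.2 /\ q.2.1 != q.2.2.
  rewrite inE => /and4P[c11 nc21 _ nc12].
  by split; [apply: contraNneq nc21 => <- | apply: contraNneq nc12 => <-].
rewrite -(card_in_imset (f := shape)); last first.
  move=> [[x z] [y y']] [[x' z'] [y1 y1']] /alt_neq[/= nxz nyy] /alt_neq[/= nxz' nyy'].
  case=> eq_xs eq_ys lt_xs lt_ys.
  have [-> ->] := set2_ord_inj nxz nxz' eq_xs lt_xs.
  by have [-> ->] := set2_ord_inj nyy nyy' eq_ys lt_ys.
have -> : 4 = #|[set: bool * bool]| by rewrite cardsT card_prod card_bool.
rewrite mulnC -cardsX.
apply/subset_leq_card/subsetP => _ /imsetP[[[x z] [y y']] qQ ->].
rewrite !inE andbT /is_M1_copy /=.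
have [/= nxz nyy] := alt_neq _ qQ.
apply/existsP; exists x; apply/existsP; exists z; apply/existsP; exists y.
apply/existsP; exists y'; rewrite nxz nyy !eqxx /=.
by move: qQ; rewrite inE => /and4P[/= -> /negbTE -> -> /negbTE ->].
Qed.

Lemma ler_sum2_natr (R : numDomainType) (I J : finType) (a b d : R)
    (k z w : I -> J -> nat) :
  (forall i j, a * (k i j)%:R <= b * (z i j)%:R + d * (w i j)%:R)%R ->
  (a * (\sum_i \sum_j k i j)%:R
     <= b * (\sum_i \sum_j z i j)%:R + d * (\sum_i \sum_j w i j)%:R)%R.
Proof.
move=> le_kzw; rewrite !natr_sum !mulr_sumr -big_split; apply: ler_sum => i _.
by rewrite !natr_sum !mulr_sumr -big_split; apply: ler_sum => j _.
Qed.

Local Open Scope ring_scope.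

Section AltQuadsLowerBound.

Variables (X Y : finType) (c : X -> Y -> bool) (R : realFieldType) (e : R).
Hypothesis e_gt0 : 0 < e.
Hypothesis red_ge : forall x, e <= (red_deg c x)%:R.
Hypothesis blue_ge : forall y, e <= (red_deg (dual_col c) y)%:R.

Let L := [set x | (rank_below (red_deg c) x)%:R < e / 4].

Lemma low_pair_le_blue_above y y' :
  e / 2 <= (common_red (dual_col c) y y')%:R ->
  (\sum_(x in L) (c x y && c x y'))%:R * (e / 4)
    <= (\sum_(x in L) (c x y && c x y') * blue_above c x y y')%:R.
Proof.
move=> cb_ge; rewrite !natr_sum mulr_suml; apply: ler_sum => x xL.
case: (c x y && c x y') => /=; rewrite ?mul0r ?mul1n ?mul1r //.
have := common_blue_le c x y y'; rewrite -(ler_nat R) natrD.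
by move: xL; rewrite inE; lra.
Qed.

Lemma dual_red_diff_ge y y' :
  (common_red (dual_col c) y y')%:R < e / 2 ->
  e / 2 <= (red_diff (dual_col c) y y')%:R.
Proof.
have := blue_ge y; rewrite (red_deg_split _ y y') natrD; lra.
Qed.

Lemma low_pair_bound y y' :
  e ^+ 2 / 4 * (\sum_(x in L) (c x y && c x y'))%:R
    <= e * (\sum_(x in L) (c x y && c x y') * blue_above c x y y')%:R
       + #|L|%:R * (red_diff (dual_col c) y y' * red_diff (dual_col c) y' y)%:R.
Proof.
set k := (\sum_(x in L) _)%N; set Z := (\sum_(x in L) _)%N.
set W := (_ * _)%N.
have k_le_L : k%:R <= #|L|%:R :> R.
  by rewrite ler_nat -sum1_card; apply: leq_sum => x _; rewrite leq_b1.
have [cb_ge | cb_lt] := leP (e / 2) (common_red (dual_col c) y y')%:R.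
  have := low_pair_le_blue_above cb_ge; rewrite -/k -/Z => kZ.
  have := mulr_ge0 (ler0n R #|L|) (ler0n R W).
  have : e * (k%:R * (e / 4)) <= e * Z%:R by rewrite ler_wpM2l // ltW.
  lra.
have W_ge : e / 2 * (e / 2) <= W%:R.
  have e2_ge0 : 0 <= e / 2 by rewrite divr_ge0 // ltW.
  rewrite natrM; apply: ler_pM => //; first exact: dual_red_diff_ge.
  by apply: dual_red_diff_ge; rewrite common_redC.
have : 0 <= e * Z%:R by rewrite mulr_ge0 // ltW.
have := ler0n R k.
nra.
Qed.

Lemma alt_quads_bound :
  #|L|%:R * e ^+ 4 <= 4 * (e + #|L|%:R) * (alt_quads c)%:R.
Proof.
have := ler_sum2_natr low_pair_bound.
rewrite sum_red_pairs -/(alt_quads (dual_col c)) alt_quads_dual.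
have := sum_blue_above_le c L; rewrite -(ler_nat R) => /(ler_wpM2l (ltW e_gt0)).
have : #|L|%:R * e ^+ 2 <= (\sum_(x in L) red_deg c x ^ 2)%:R.
  rewrite mulr_natl -sumr_const natr_sum; apply: ler_sum => x _.
  by rewrite natrX !expr2; apply: ler_pM => //; exact: ltW.
have e2_ge0 : 0 <= e ^+ 2 / 4 by rewrite divr_ge0 // exprn_ge0 // ltW.
move=> /(ler_wpM2l e2_ge0).
lra.
Qed.

Lemma alt_quads_ge (y0 : Y) : e ^+ 4 / 20 <= (alt_quads c)%:R.
Proof.
have e_le_X : e <= #|X|%:R.
  by apply: le_trans (blue_ge y0) _; rewrite ler_nat red_deg_le_card.
have L_ge : e / 4 <= #|L|%:R.
  by apply: card_low_rank; have := e_gt0; lra.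
have L_gt0 : 0 < #|L|%:R :> R by have := e_gt0; lra.
have le20 : 4 * (e + #|L|%:R) <= #|L|%:R * 20 by lra.
have key : #|L|%:R * e ^+ 4 <= #|L|%:R * (20 * (alt_quads c)%:R).
  rewrite [X in _ <= X]mulrA; apply: le_trans alt_quads_bound _.
  by rewrite ler_wpM2r.
by rewrite ler_pdivrMr // -(ler_pM2l L_gt0) (mulrC (alt_quads c)%:R); exact: key.
Qed.

End AltQuadsLowerBound.

Theorem lemma3p6 (R : realFieldType) (eps : R) (n : nat)
  (c : 'I_n -> 'I_n -> bool) :
  0 < eps ->
  (forall x : 'I_n, eps * n%:R <= #|[set y : 'I_n | c x y]|%:R) ->
  (forall y : 'I_n, eps * n%:R <= #|[set x : 'I_n | ~~ c x y]|%:R) ->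
  eps ^+ 4 * n%:R ^+ 4 / 150%:R <= #|M1_copies c|%:R.
Proof.
move=> eps_gt0 red_ge blue_ge.
have [n0 | n_gt0] := posnP n.
  by rewrite [in n%:R]n0 expr0n /= mulr0 mul0r.
rewrite -exprMn; set e := eps * n%:R.
have e_gt0 : 0 < e by rewrite mulr_gt0 ?ltr0n.
have red_deg_ge x : e <= (red_deg c x)%:R by rewrite red_degE.
have blue_deg_ge y : e <= (red_deg (dual_col c) y)%:R by rewrite red_degE; apply: blue_ge.
have := alt_quads_ge e_gt0 red_deg_ge blue_deg_ge (Ordinal n_gt0).
have : (alt_quads c)%:R <= 4 * #|M1_copies c|%:R :> R.
  by rewrite -natrM ler_nat alt_quads_le_copies.
have := exprn_ge0 4 (ltW e_gt0).
lra.
Qed.
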